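(* Let $m=|V|\ge2$, $v,w\in V$ with $v\ne w$, and $\beta=\frac1m\sum_{u\in V}e_u$ the barycenter of $S$. Define $$\ell_{vw}(x)=\max\{0,n_{vw}^Tx-c\}-\ell_v^{1/2}(x)-\ell_w^{1/2}(x),\qquad n_{vw}=4(e_{vw}-\beta),\quad c=1-\frac4m.$$ Then $\ell_{vw}$ is affine on each corner $S_u$, $u\in V$; $\ell_{vw}(e_{vw})=1$; $\ell_{vw}$ vanishes at every vertex of $S_v$ and of $S_w$ other than $e_{vw}$; and $\ell_{vw}(x)=0$ for all $x\in S_u$ with $u\notin\{v,w\}$.
   Context: $V$ is a finite index set, $e_u$ ($u\in V$) the standard orthonormal basis of $\mathbb{R}^V$, $S=\operatorname{conv}\{e_u:u\in V\}$. For $u\ne w$, $e^\mu_{uw}=(1-\mu)e_u+\mu e_w$, $S_u^\mu=\operatorname{conv}(\{e_u\}\cup\{e_{uw}^\mu:w\ne u\})$, and abbreviations $e_{uw}=e^{1/2}_{uw}=\frac12(e_u+e_w)$, $S_u=S_u^{1/2}$. For $u\in V$, $\ell_u^{1/2}(x)=\max\{0,(n_u)^Tx-d\}$ with $n_u=\frac{2}{m}\sum_{w\ne u}(e_u-e_w)$ and $d=\frac{m/2-1}{m/2}$ (the function $\ell_u^\mu$ with $\ell_u^\mu(x)=\max\{0,(n_u^\mu)^Tx-d_\mu\}$, $n_u^\mu=\frac1{\mu m}\sum_{w\ne u}(e_u-e_w)$, $d_\mu=\frac{(1-\mu)m-1}{\mu m}$, at $\mu=1/2$). *)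

(* Points of R^V are functions T -> R, T : finType is V. *)
From mathcomp Require Import all_boot all_order all_algebra.
Set Implicit Arguments. Unset Strict Implicit. Unset Printing Implicit Defensive.
Import Order.TTheory GRing.Theory Num.Theory.
Local Open Scope ring_scope.

Section Defs.
Variables (R : realFieldType) (T : finType).

Definition msz : R := #|T|%:R.

Definition evec (u : T) : T -> R := fun t => (t == u)%:R.

Definition emu (mu : R) (u w : T) : T -> R :=
  fun t => (1 - mu) * evec u t + mu * evec w t.

Definition ehalf (u w : T) : T -> R := emu (2^-1) u w.

Definition dot (a x : T -> R) : R := \sum_(t : T) a t * x t.

Definition in_conv (I : finType) (p : I -> T -> R) (x : T -> R) : Prop :=
  exists lam : I -> R,
    [/\ forall i, 0 <= lam i, \sum_(i : I) lam i = 1 &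
        forall t, x t = \sum_(i : I) lam i * p i t].

(* generators of S_u^mu : e_u and e^mu_{uw} for w <> u (indexed by w : T,
   with index u giving e_u) *)
Definition corner_pts (mu : R) (u : T) : T -> T -> R :=
  fun w => if w == u then evec u else emu mu u w.

Definition in_corner (mu : R) (u : T) (x : T -> R) : Prop :=
  in_conv (corner_pts mu u) x.

Definition in_simplex (x : T -> R) : Prop := in_conv evec x.

Definition nmu (mu : R) (u : T) : T -> R :=
  fun t => (mu * msz)^-1 * \sum_(w : T | w != u) (evec u t - evec w t).

Definition dmu (mu : R) : R := ((1 - mu) * msz - 1) / (mu * msz).

Definition ellmu (mu : R) (u : T) (x : T -> R) : R :=
  Num.max 0 (dot (nmu mu u) x - dmu mu).

Definition bary : T -> R := fun t => msz^-1 * \sum_(u : T) evec u t.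

Definition nvw (v w : T) : T -> R := fun t => 4 * (ehalf v w t - bary t).

Definition cconst : R := 1 - 4 / msz.

Definition ellvw (v w : T) (x : T -> R) : R :=
  Num.max 0 (dot (nvw v w) x - cconst) - ellmu (2^-1) v x - ellmu (2^-1) w x.

Definition affine_on (P : (T -> R) -> Prop) (f : (T -> R) -> R) : Prop :=
  exists (a : T -> R) (b : R), forall x, P x -> f x = dot a x + b.

End Defs.

From mathcomp Require Import all_boot all_order all_algebra.
From mathcomp Require Import ring lra.
Import Order.TTheory GRing.Theory Num.Theory.
Set Implicit Arguments. Unset Strict Implicit. Unset Printing Implicit Defensive.
Local Open Scope ring_scope.

(* Every corner S_u^mu lies in the simplex S, i.e. on the
   hyperplane sum_t x_t = 1, and on that hyperplane the linear forms in the
   definition of ell_vw collapse to coordinates: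
     (n_u^mu)^T x - d_mu = (x_u - (1 - mu)) / mu,   n_vw^T x - c = 2(x_v + x_w) - 1.
   Hence ell_vw(x) = h(x_v, x_w), where
     h(a, b) = max(0, 2(a+b) - 1) - max(0, 2a - 1) - max(0, 2b - 1).
   On S_v^{1/2} we have x_v >= 1/2 and x_v + x_w <= 1, where h(x_v, x_w) = 2 x_w;
   symmetrically h = 2 x_v on S_w^{1/2}; on S_u^{1/2} with u outside {v, w}
   we have x_v + x_w <= 1 - x_u <= 1/2, where h vanishes.  The vertex values
   are then read off from these formulas, since every vertex of S_v (resp. S_w)
   belongs to S_v (resp. S_w). *)

Section Basis.
Variables (R : realFieldType) (T : finType).
Implicit Types (x a b : T -> R) (k c : R).

Local Notation evec := (@evec R T).

Lemma sum_evec (u : T) : \sum_t evec u t = 1.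
Proof.
rewrite (bigD1 u) //= big1 ?addr0; first by rewrite /evec eqxx.
by move=> t /negbTE tu; rewrite /evec tu.
Qed.

Lemma sum_evec_index (t : T) : \sum_u evec u t = 1.
Proof.
rewrite (bigD1 t) //= big1 ?addr0; first by rewrite /evec eqxx.
by move=> u ut; rewrite /evec eq_sym (negbTE ut).
Qed.

Lemma dot_ext a b x : (forall t, a t = b t) -> dot a x = dot b x.
Proof. by move=> ab; apply: eq_bigr => t _; rewrite ab. Qed.

Lemma dotDl a b x : dot (fun t => a t + b t) x = dot a x + dot b x.
Proof. by rewrite /dot -big_split; apply: eq_bigr => t _; rewrite mulrDl. Qed.

Lemma dotZl k a x : dot (fun t => k * a t) x = k * dot a x.
Proof. by rewrite /dot mulr_sumr; apply: eq_bigr => t _; rewrite mulrA. Qed.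

Lemma dot_cst c x : dot (fun _ => c) x = c * \sum_t x t.
Proof. by rewrite /dot mulr_sumr. Qed.

Lemma dot_evec (u : T) x : dot (evec u) x = x u.
Proof.
rewrite /dot (bigD1 u) //= big1 ?addr0; first by rewrite /evec eqxx mul1r.
by move=> t /negbTE tu; rewrite /evec tu mul0r.
Qed.

Lemma coord2_le_sum (a b : T) x : a != b -> (forall t, 0 <= x t) ->
  x a + x b <= \sum_t x t.
Proof.
move=> ab x_ge; rewrite (bigD1 a) //= (bigD1 b) 1?eq_sym //= addrA lerDl.
exact: sumr_ge0.
Qed.

Lemma coord3_le_sum (a b c : T) x : a != b -> a != c -> b != c ->
  (forall t, 0 <= x t) -> x a + x b + x c <= \sum_t x t.
Proof.
move=> ab ac bc x_ge; rewrite (bigD1 a) //= (bigD1 b) 1?eq_sym //= (bigD1 c) /=.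
  by rewrite !addrA lerDl; exact: sumr_ge0.
by rewrite eq_sym ac eq_sym bc.
Qed.

End Basis.

Section Convex.
Variables (R : realFieldType) (T I : finType).
Implicit Types (p : I -> T -> R) (x : T -> R).

Lemma in_conv_coord_lb p x (t : T) (c : R) :
  (forall i, c <= p i t) -> in_conv p x -> c <= x t.
Proof.
move=> pc [lam [lam0 lam1 xE]].
rewrite xE -[c]mul1r -lam1 mulr_suml; apply: ler_sum => i _.
exact: ler_wpM2l.
Qed.

Lemma in_conv_sum p x :
  (forall i, \sum_t p i t = 1) -> in_conv p x -> \sum_t x t = 1.
Proof.
move=> p1 [lam [_ lam1 xE]].
under eq_bigr do rewrite xE.
by rewrite exchange_big -lam1; apply: eq_bigr => i _; rewrite -mulr_sumr p1 mulr1.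
Qed.

Lemma in_conv_gen p (i : I) : in_conv p (p i).
Proof.
exists (@evec R I i); split; first by move=> j; rewrite /evec ler0n.
  exact: sum_evec.
by move=> t; rewrite -(dot_evec i (fun j => p j t)).
Qed.

End Convex.

Section PairHinge.
Variable R : realFieldType.
Implicit Types a b : R.

(* The function h(a, b) to which ell_vw reduces in the coordinates x_v, x_w. *)
Definition pair_hinge a b : R :=
  Num.max 0 (2 * (a + b) - 1) - Num.max 0 (2 * a - 1) - Num.max 0 (2 * b - 1).

Lemma pair_hingeC a b : pair_hinge a b = pair_hinge b a.
Proof. by rewrite /pair_hinge [b + a]addrC; ring. Qed.

(* In the region a >= 1/2, b >= 0, a + b <= 1 only the first two hinges are
   active, so h is the linear function 2b. *)
Lemma pair_hinge_big a b : 2^-1 <= a -> 0 <= b -> a + b <= 1 ->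
  pair_hinge a b = 2 * b.
Proof.
move=> a_ge b_ge ab_le; rewrite /pair_hinge (@max_l _ _ 0 (2 * b - 1)); last lra.
by rewrite !max_r; lra.
Qed.

(* In the region a, b >= 0, a + b <= 1/2 no hinge is active. *)
Lemma pair_hinge_small a b : 0 <= a -> 0 <= b -> a + b <= 2^-1 ->
  pair_hinge a b = 0.
Proof. by move=> a_ge b_ge ab_le; rewrite /pair_hinge !max_l; lra. Qed.

End PairHinge.

Section Corners.
Variables (R : realFieldType) (T : finType).
Implicit Types (x : T -> R) (mu : R).

Local Notation evec := (@evec R T).
Local Notation msz := (@msz R T).
Local Notation nmu := (@nmu R T).
Local Notation nvw := (@nvw R T).

Lemma msz_neq0 : (0 < #|T|)%N -> msz != 0.
Proof. by rewrite /msz pnatr_eq0 -lt0n. Qed.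

Lemma nmu_dot mu (u : T) x : (0 < #|T|)%N -> mu != 0 -> \sum_t x t = 1 ->
  dot (nmu mu u) x - @dmu R T mu = (x u - (1 - mu)) / mu.
Proof.
move=> Tpos mu0 sx1; have m0 := msz_neq0 Tpos.
have card_others : (#|T|.-1)%:R = msz - 1.
  by rewrite /msz -{2}(prednK Tpos) mulrS addrC addrK.
have nmuE t : nmu mu u t = (mu * msz)^-1 * msz * evec u t + - (mu * msz)^-1.
  have others : \sum_(w | w != u) evec w t = 1 - evec u t.
    by rewrite -(sum_evec_index R t) [in RHS](bigD1 u) //= addrC addrK.
  rewrite /nmu sumrB sumr_const others (eq_card (B := predC1 u)) // cardC1.
  by rewrite -mulr_natr card_others; field; rewrite mu0 m0.
rewrite (dot_ext x nmuE) dotDl dotZl dot_evec dot_cst sx1 /dmu.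
by field; rewrite mu0 m0.
Qed.

Lemma nvw_dot (v w : T) x : (0 < #|T|)%N -> \sum_t x t = 1 ->
  dot (nvw v w) x - @cconst R T = 2 * (x v + x w) - 1.
Proof.
move=> /msz_neq0 m0 sx1.
have nvwE t : nvw v w t = 2 * evec v t + (2 * evec w t + - 4 / msz).
  by rewrite /nvw /ehalf /emu /bary sum_evec_index; field.
rewrite (dot_ext x nvwE) !dotDl !dotZl !dot_evec dot_cst sx1 /cconst.
by field.
Qed.

Local Notation ellvw := (@ellvw R T).
Local Notation in_corner := (@in_corner R T).

Lemma ellvw_pair_hinge (v w : T) x : (0 < #|T|)%N -> \sum_t x t = 1 ->
  ellvw v w x = pair_hinge (x v) (x w).
Proof.
have half_neq0 : 2^-1 != 0 :> R by rewrite invr_eq0 pnatr_eq0.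
move=> Tpos sx1; rewrite /ellvw /ellmu nvw_dot // !nmu_dot //.
by rewrite /pair_hinge; congr (_ - Num.max 0 _ - Num.max 0 _); field.
Qed.

Lemma corner_pts_ge0 mu (u w t : T) : 0 <= mu -> mu <= 1 ->
  0 <= corner_pts mu u w t.
Proof.
move=> mu_ge mu_le; rewrite /corner_pts /emu /evec.
by case: ifP => _; case: (t == u); case: (t == w); rewrite /= ?mulr0 ?mulr1 ?addr0 ?add0r; lra.
Qed.

Lemma corner_pts_sum mu (u w : T) : \sum_t corner_pts mu u w t = 1.
Proof.
rewrite /corner_pts; case: ifP => _; first exact: sum_evec.
by rewrite big_split /= -!mulr_sumr !sum_evec; ring.
Qed.

Lemma corner_pts_apex mu (u w : T) : 0 <= mu -> mu <= 1 ->
  1 - mu <= corner_pts mu u w u.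
Proof.
move=> mu_ge mu_le; rewrite /corner_pts /emu /evec.
by case: ifP => _; rewrite /= eqxx; case: (u == w); rewrite /=; lra.
Qed.

Lemma in_corner_coords mu (u : T) x : 0 <= mu -> mu <= 1 -> in_corner mu u x ->
  [/\ \sum_t x t = 1, forall t, 0 <= x t & 1 - mu <= x u].
Proof.
move=> mu_ge mu_le xS; split.
- exact: in_conv_sum (corner_pts_sum mu u) xS.
- by move=> t; apply: in_conv_coord_lb xS => w; apply: corner_pts_ge0.
- by apply: in_conv_coord_lb xS => w; apply: corner_pts_apex.
Qed.

Lemma apex_in_corner mu (u : T) : in_corner mu u (evec u).
Proof. by have := in_conv_gen (corner_pts mu u) u; rewrite /corner_pts eqxx. Qed.

Lemma emu_in_corner mu (u w : T) : w != u -> in_corner mu u (emu mu u w).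
Proof.
by move=> wu; have := in_conv_gen (corner_pts mu u) w; rewrite /corner_pts (negbTE wu).
Qed.

Section PairVW.
Variables (v w : T).
Hypotheses (Tpos : (0 < #|T|)%N) (vw : v != w).

Let half_ge0 : 0 <= 2^-1 :> R. Proof. by rewrite invr_ge0 ler0n. Qed.
Let half_le1 : 2^-1 <= 1 :> R. Proof. by rewrite invf_le1 ?ler1n. Qed.

Lemma ellvw_on_first_corner x : in_corner (2^-1) v x -> ellvw v w x = 2 * x w.
Proof.
case/(in_corner_coords half_ge0 half_le1) => sx1 x_ge xv_ge.
have := coord2_le_sum vw x_ge; rewrite sx1 => xvw_le.
by rewrite ellvw_pair_hinge // pair_hinge_big //; lra.
Qed.

Lemma ellvw_on_second_corner x : in_corner (2^-1) w x -> ellvw v w x = 2 * x v.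
Proof.
case/(in_corner_coords half_ge0 half_le1) => sx1 x_ge xw_ge.
have := coord2_le_sum vw x_ge; rewrite sx1 => xvw_le.
by rewrite ellvw_pair_hinge // pair_hingeC pair_hinge_big //; lra.
Qed.

Lemma ellvw_on_other_corner (u : T) x : u != v -> u != w ->
  in_corner (2^-1) u x -> ellvw v w x = 0.
Proof.
move=> uv uw /(in_corner_coords half_ge0 half_le1) [sx1 x_ge xu_ge].
have := coord3_le_sum uv uw vw x_ge; rewrite sx1 => xuvw_le.
by rewrite ellvw_pair_hinge // pair_hinge_small //; lra.
Qed.

End PairVW.

End Corners.

Theorem lemmaA2 (R : realFieldType) (T : finType) (v w : T) :
  (1 < #|T|)%N -> v != w ->
  [/\ (forall u : T, affine_on (@in_corner R T (2^-1) u) (@ellvw R T v w)),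
      @ellvw R T v w (@ehalf R T v w) = 1,
      (@ellvw R T v w (@evec R T v) = 0 /\ @ellvw R T v w (@evec R T w) = 0),
      (forall u : T, u != v -> u != w ->
         @ellvw R T v w (@ehalf R T v u) = 0 /\ @ellvw R T v w (@ehalf R T w u) = 0) &
      (forall u : T, u != v -> u != w ->
         forall x : T -> R, @in_corner R T (2^-1) u x -> @ellvw R T v w x = 0)].
Proof.
move=> /ltnW Tpos vw; have wv : w != v by rewrite eq_sym.
have on_v := ellvw_on_first_corner (R := R) Tpos vw.
have on_w := ellvw_on_second_corner (R := R) Tpos vw.
split.
- move=> u; have [->|uv] := eqVneq u v.
    by exists (fun t => 2 * @evec R T w t), 0 => x /on_v ->; rewrite dotZl dot_evec addr0.
  have [->|uw] := eqVneq u w.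
    by exists (fun t => 2 * @evec R T v t), 0 => x /on_w ->; rewrite dotZl dot_evec addr0.
  exists (fun _ => 0), 0 => x /(ellvw_on_other_corner Tpos vw uv uw) ->.
  by rewrite dot_cst mul0r addr0.
- rewrite on_v; last exact: emu_in_corner.
  by rewrite /ehalf /emu /evec eqxx (negbTE wv) /=; field.
- split; [rewrite on_v | rewrite on_w]; try exact: apex_in_corner.
    by rewrite /evec (negbTE wv) mulr0.
  by rewrite /evec (negbTE vw) mulr0.
- move=> u uv uw; split; [rewrite on_v | rewrite on_w]; try exact: emu_in_corner.
    by rewrite /ehalf /emu /evec (negbTE wv) eq_sym (negbTE uw) /=; ring.
  by rewrite /ehalf /emu /evec (negbTE vw) eq_sym (negbTE uv) /=; ring.
- by move=> u uv uw x; apply: ellvw_on_other_corner.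
Qed.
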